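(* Let $q=r^2$ where $r$ is a prime power and let $s$ be a positive integer. Let $C_1,\dots,C_s$ be linear codes of the same length $m$ over $\mathbb{F}_q$. If $A\in M_{s,s}(\mathbb{F}_q)$ satisfies $AA^\dagger=\lambda J_s$ for some nonzero $\lambda\in\mathbb{F}_q$ and $C_i\subseteq C_{s-i+1}^{\perp_H}$ for all $1\le i\le s$, then the matrix-product code $C_A=[C_1,\dots,C_s]\cdot A$ satisfies $C_A\subseteq C_A^{\perp_H}$.
   Context: For $a\in\mathbb{F}_q$, $\overline{a}:=a^r$. For a matrix $A=[a_{ij}]$ over $\mathbb{F}_q$, $A^\dagger:=[\overline{a_{ji}}]$. $J_s$ is the $s\times s$ anti-diagonal matrix with all anti-diagonal entries equal to $1$ and all other entries $0$. The Hermitian inner product on $\mathbb{F}_q^n$ is $\langle u,v\rangle_H=\sum_i u_i\overline{v_i}$, and $C^{\perp_H}$ is the dual of $C$ with respect to it. If $C_i$ has generator matrix $G_i$ and $A=[a_{ij}]\in M_{s,l}(\mathbb{F}_q)$, the matrix-product code $[C_1,\dots,C_s]\cdot A$ is the linear code of length $ml$ generated by the block matrix whose $(i,j)$ block is $a_{ij}G_i$. *)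

From HB Require Import structures.
From mathcomp Require Import all_boot all_order all_algebra all_field.
Set Implicit Arguments. Unset Strict Implicit. Unset Printing Implicit Defensive.
Import GRing.Theory.
Local Open Scope ring_scope.

Definition hconj (F : finFieldType) (r : nat) (a : F) : F := a ^+ r.

Definition hdagger (F : finFieldType) (r : nat) (m n : nat) (A : 'M[F]_(m, n))
  : 'M[F]_(n, m) := \matrix_(i, j) hconj r (A j i).

(* J_s : anti-diagonal all-ones matrix (0-based: entry (i,j) is 1 iff i + j = s - 1) *)
Definition antidiag (F : finFieldType) (s : nat) : 'M[F]_s :=
  \matrix_(i, j) (if (i + j == s.-1)%N then 1 else 0).

Definition hip (F : finFieldType) (r n : nat) (u v : 'rV[F]_n) : F :=
  \sum_(i < n) u 0 i * hconj r (v 0 i).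

(* A linear code is given by a generator matrix G; its codewords are the row
   vectors in the row space of G. *)
Definition in_code (F : finFieldType) (k n : nat) (G : 'M[F]_(k, n)) (v : 'rV[F]_n)
  : Prop := (v <= G)%MS.

Definition in_hdual (F : finFieldType) (r k n : nat) (G : 'M[F]_(k, n)) (v : 'rV[F]_n)
  : Prop := forall c, in_code G c -> hip r v c = 0.

Definition sub_hdual (F : finFieldType) (r k1 k2 n : nat)
  (C : 'M[F]_(k1, n)) (D : 'M[F]_(k2, n)) : Prop :=
  forall v, in_code C v -> in_hdual r D v.

(* Matrix-product code [C_1,...,C_s] . A, generated by the block matrix whose
   (i,j) block is a_ij G_i. *)
Definition mp_code (F : finFieldType) (s l m : nat) (k : 'I_s -> nat)
  (G : forall i : 'I_s, 'M[F]_(k i, m)) (A : 'M[F]_(s, l))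
  : 'M[F]_(\sum_(i < s) k i, \sum_(j < l) m) :=
  \mxblock_(i < s, j < l) (A i j *: G i).

(* The Hermitian form is sesquilinear (conjugation x |-> x^r is additive since
   r is a power of the characteristic), so the Hermitian product of two
   codewords of [C_1, ..., C_s] . A, with components c_i, d_l in C_i, C_l, is
   the sum over (i, l) of (A A^dagger)_il <c_i, d_l>_H.  As A A^dagger is a
   multiple of J_s only the terms with l = s - i + 1 survive, and those vanish
   because C_i is Hermitian-orthogonal to C_(s-i+1). *)

From HB Require Import structures.
From mathcomp Require Import all_boot all_order all_algebra all_field.
From mathcomp Require Import zify.
Import GRing.Theory.
Local Open Scope ring_scope.

Lemma pchar_nat_card_sqrt (F : finFieldType) (p e : nat) :
  prime p -> #|F| = ((p ^ e) ^ 2)%N -> [pchar F].-nat (p ^ e)%N.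
Proof.
move=> p_pr cardF.
have p_char : p \in [pchar F].
  by apply: (card_finPcharP (n := (e * 2)%N)); rewrite // cardF expnM.
by rewrite pnatX (eq_pnat _ (pcharf_eq p_char)) pnat_id.
Qed.

Lemma antidiag_revE (F : finFieldType) (s : nat) (i l : 'I_s) :
  antidiag F s i l = (l == rev_ord i)%:R.
Proof.
rewrite mxE; suff -> : (i + l == s.-1)%N = (l == rev_ord i) by case: (_ == _).
apply/eqP/eqP => [sum_il | ->] /=.
  by apply/val_inj => /=; move: (ltn_ord i) sum_il; lia.
by move: (ltn_ord i); lia.
Qed.

Lemma hip_mxrow (F : finFieldType) (r s m : nat) (u w : 'I_s -> 'rV[F]_m) :
  hip r (\mxrow_j u j) (\mxrow_j w j) = \sum_j hip r (u j) (w j).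
Proof.
have hipE n (x y : 'rV[F]_n) : hip r x y = (x *m (map_mx (hconj r) y)^T) 0 0.
  by rewrite /hip !mxE; apply: eq_bigr => t _; rewrite !mxE.
rewrite hipE.
have -> : map_mx (hconj r) (\mxrow_j w j) = \mxrow_j map_mx (hconj r) (w j).
  by apply/matrixP => i j; rewrite !mxE.
rewrite tr_mxrow mul_mxrow_mxcol summxE.
by apply: eq_bigr => j _; rewrite hipE.
Qed.

Section Sesquilinear.

Variables (F : finFieldType) (r : nat).
Hypothesis r_pchar : [pchar F].-nat r.

Lemma hconj_sum (I : finType) (f : I -> F) :
  hconj r (\sum_i f i) = \sum_i hconj r (f i).
Proof.
apply: (big_morph (hconj r)) => [a b|]; first exact: exprDn_pchar.
by rewrite /hconj expr0n; case/andP: r_pchar => /lt0n_neq0 /negPf ->.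
Qed.

Lemma hip_sumZ n (s : nat) (a b : 'I_s -> F) (c d : 'I_s -> 'rV[F]_n) :
  hip r (\sum_i a i *: c i) (\sum_l b l *: d l) =
  \sum_i \sum_l a i * hconj r (b l) * hip r (c i) (d l).
Proof.
rewrite /hip.
under eq_bigr => t _ do (rewrite !summxE hconj_sum mulr_suml;
  under eq_bigr => i _ do rewrite mulr_sumr).
rewrite exchange_big /=; apply: eq_bigr => i _.
rewrite exchange_big /=; apply: eq_bigr => l _.
rewrite mulr_sumr; apply: eq_bigr => t _.
by rewrite !mxE /hconj exprMn mulrACA.
Qed.

Lemma hip_mp_code (s l m : nat) (k : 'I_s -> nat)
    (G : forall i : 'I_s, 'M[F]_(k i, m)) (A : 'M[F]_(s, l))
    (x y : 'rV[F]_(\sum_(i < s) k i)) :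
  hip r (x *m mp_code G A) (y *m mp_code G A) =
  \sum_i \sum_i' (A *m hdagger r A) i i'
                 * hip r (submxrow x i *m G i) (submxrow y i' *m G i').
Proof.
rewrite -[in LHS](submxrowK x) -[in LHS](submxrowK y) /mp_code.
rewrite !mul_mxrow_mxblock hip_mxrow.
under eq_bigr => j _ do
  (under eq_bigr => i _ do rewrite -scalemxAr;
   under [in X in hip _ _ X]eq_bigr => i _ do rewrite -scalemxAr;
   rewrite hip_sumZ).
rewrite exchange_big /=; apply: eq_bigr => i _.
rewrite exchange_big /=; apply: eq_bigr => i' _.
by rewrite mxE mulr_suml; apply: eq_bigr => j _; rewrite [hdagger _ _ _ _]mxE.
Qed.

End Sesquilinear.

Theorem corollary3p2 (F : finFieldType) (r : nat)
  (Hr : exists p e : nat, [/\ prime p, (0 < e)%N & r = (p ^ e)%N])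
  (Hq : #|F| = (r ^ 2)%N)
  (s m : nat) (Hs : (0 < s)%N)
  (k : 'I_s -> nat) (G : forall i : 'I_s, 'M[F]_(k i, m))
  (A : 'M[F]_s) (lambda : F) (Hlam : lambda != 0)
  (HA : A *m hdagger r A = lambda *: antidiag F s)
  (HC : forall i : 'I_s, sub_hdual r (G i) (G (rev_ord i))) :
  sub_hdual r (mp_code G A) (mp_code G A).
Proof.
have r_pchar : [pchar F].-nat r.
  by case: Hr => p [e [p_pr _ r_def]]; rewrite r_def pchar_nat_card_sqrt -?r_def.
move=> _ /submxP[x ->] _ /submxP[y ->].
rewrite hip_mp_code //; apply: big1 => i _; apply: big1 => i' _.
rewrite HA mxE antidiag_revE; case: eqP => [-> | _]; last by rewrite mulr0 mul0r.
by rewrite (HC i _ (submxMl _ _) _ (submxMl _ _)) mulr0.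
Qed.
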